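(* Let $\mathcal B$ and $\tilde{\mathcal B}$ be two matrix bundles of $n\times n$ complex matrices such that the closure $\overline{\tilde{\mathcal B}}\supseteq\mathcal B$, and such that a matrix in $\mathcal B$ has at least as many distinct eigenvalues as a matrix in $\tilde{\mathcal B}$. Let $d=\{d_1\ge d_2\ge\cdots\}$ and $\tilde d=\{\tilde d_1\ge\tilde d_2\ge\cdots\}$ be the degree sequences of minimal polynomials associated with $\mathcal B$ and $\tilde{\mathcal B}$ respectively. Then, as partitions of $n$, $\tilde d\ge d$ in the dominance ordering, i.e. $$\tilde d_1+\tilde d_2+\cdots+\tilde d_j\ \ge\ d_1+d_2+\cdots+d_j\qquad\text{for each } j=1,2,\dots.$$
   Context: For an eigenvalue $\lambda$ of a matrix with elementary Jordan blocks of orders $n_1\ge n_2\ge\cdots\ge n_l>0$, its Segre characteristic is the infinite sequence $\{n_1,\dots,n_l,0,0,\dots\}$. Given $k$ nonincreasing sequences $\{n_{i1}\ge n_{i2}\ge\cdots\}$ of nonnegative integers ($i=1,\dots,k$, finitely many nonzero terms) with $\sum_{i,j}n_{ij}=n$, the matrix bundle they define is the set of all $n\times n$ complex matrices having exactly $k$ distinct eigenvalues (with arbitrary values) whose Segre characteristics are these sequences. The closure is taken in $\mathbb{C}^{n\times n}$. For a matrix in such a bundle, its minimal polynomials (invariant factors) $p_1,p_2,\dots$ satisfy $p_{i+1}\mid p_i$, and $\deg p_i=d_i=\sum_{j=1}^k n_{ji}$; the sequence $d=\{d_1\ge d_2\ge\cdots\}$ is the degree sequence of minimal polynomials associated with the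 bundle, and it is a partition of $n$. *)

From HB Require Import structures.
From mathcomp Require Import all_boot all_order all_algebra.
From mathcomp Require Import complex.
From mathcomp Require Import reals.
Set Implicit Arguments. Unset Strict Implicit. Unset Printing Implicit Defensive.
Import Order.TTheory GRing.Theory Num.Theory.
Local Open Scope ring_scope.

(* A Segre characteristic (of one eigenvalue), given by its nonzero terms:
   a nonempty nonincreasing list of positive integers n_1 >= n_2 >= ... > 0. *)
Definition segre_seq (p : seq nat) : bool :=
  [&& sorted geq p, all (fun x => 0 < x)%N p & p != [::]].

Definition bundle_data (n : nat) (ps : seq (seq nat)) : bool :=
  all segre_seq ps && (sumn (map sumn ps) == n).

(* Jordan matrix with a list of elementary Jordan blocks (eigenvalue, order),
   placed consecutively along the diagonal. Each position carries its
   diagonal entry and whether a superdiagonal 1 follows inside its block. *)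
Definition jordan_data (C : Type) (blocks : seq (C * nat)) : seq (C * bool) :=
  flatten [seq [seq (b.1, (k.+1 < b.2)%N) | k <- iota 0 b.2] | b <- blocks].

Definition jordan_mx (C : nzRingType) (n : nat) (blocks : seq (C * nat)) : 'M[C]_n :=
  \matrix_(i < n, j < n)
    let e := nth (0, false) (jordan_data blocks) i in
    if i == j then e.1
    else if (j == i.+1 :> nat) && e.2 then 1 else 0.

(* The matrix bundle defined by ps = [:: p_1; ...; p_k]: matrices having
   exactly k distinct eigenvalues lam_1, ..., lam_k (arbitrary values), the
   Segre characteristic of lam_i being p_i; i.e. matrices similar to the
   Jordan matrix with blocks J_{p_i j}(lam_i). *)
Definition in_bundle (R : realType) (n : nat) (ps : seq (seq nat))
    (A : 'M[R[i]]_n) : Prop :=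
  exists lam : seq R[i],
    [/\ size lam = size ps, uniq lam &
      exists P : 'M[R[i]]_n, P \in unitmx /\
        A = invmx P *m jordan_mx n
              (flatten [seq [seq (x.1, m) | m <- x.2] | x <- zip lam ps]) *m P].

Definition in_closure (R : realType) (n : nat) (S : 'M[R[i]]_n -> Prop)
    (A : 'M[R[i]]_n) : Prop :=
  forall e : R, 0 < e ->
    exists B, S B /\ forall i j, `|A i j - B i j| < (e%:C)%C.

(* Degree sequence of minimal polynomials: d_i = sum_j n_{j i} (0-indexed). *)
Definition deg_seq (ps : seq (seq nat)) (i : nat) : nat :=
  (\sum_(p <- ps) nth 0 p i)%N.

From HB Require Import structures.
From mathcomp Require Import all_boot all_order all_algebra.
From mathcomp Require Import complex.
From mathcomp Require Import reals.
From mathcomp Require Import zify.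
Set Implicit Arguments. Unset Strict Implicit. Unset Printing Implicit Defensive.
Import Order.TTheory GRing.Theory Num.Theory.

(* For V with j rows, the Krylov space of B and V (spanned by the rows of the
   V B^k) has dimension at most rank f(B) + j deg f for every monic f.  For B
   in the bundle of pt and f its (j+1)-st invariant factor this bound is at
   most d~_1 + ... + d~_j.  Conversely, let A be the Jordan matrix of the
   bundle of ps with eigenvalues 0, 1, 2, ... and let row i of V be the sum of
   the first basis vectors of the i-th Jordan blocks of all eigenvalues.
   Spectral projections and powers of A - lambda recover from V every basis
   vector of the first j blocks of each eigenvalue, so the Krylov space of A
   and V has dimension at least d_1 + ... + d_j.  The Krylov matrix depends
   continuously on B and rank is lower semicontinuous, so approximating A by
   matrices of the bundle of pt gives the inequality. *)

Section EntrywiseNorm.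
Local Open Scope ring_scope.
Variable C : numFieldType.

Definition mx_l1 m p (M : 'M[C]_(m, p)) : C := \sum_i \sum_j `|M i j|.

Lemma mx_l1_ge0 m p (M : 'M[C]_(m, p)) : 0 <= mx_l1 M.
Proof. by apply: sumr_ge0 => i _; apply: sumr_ge0. Qed.

Lemma ler_mx_l1 m p (M : 'M[C]_(m, p)) i j : `|M i j| <= mx_l1 M.
Proof.
rewrite /mx_l1 (bigD1 i) //= (bigD1 j) //= -addrA lerDl.
by rewrite addr_ge0 ?sumr_ge0 // => *; rewrite sumr_ge0.
Qed.

Lemma mx_l1_gt0 m p (M : 'M[C]_(m, p)) : M != 0 -> 0 < mx_l1 M.
Proof.
move=> nzM; have [[i j] /= nzMij] : exists ij : 'I_m * 'I_p, M ij.1 ij.2 != 0.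
  apply/existsP; apply: contraR nzM => /existsPn M0; apply/eqP/matrixP => i j.
  by rewrite mxE; apply/eqP/negbNE/(M0 (i, j)).
by apply: lt_le_trans (ler_mx_l1 M i j); rewrite normr_gt0.
Qed.

Lemma mx_l1_le_entries m p (M : 'M[C]_(m, p)) b :
  (forall i j, `|M i j| <= b) -> mx_l1 M <= (m * p)%:R * b.
Proof.
move=> Mb; apply: le_trans (ler_sum _ (fun i _ => ler_sum _ (fun j _ => Mb i j))) _.
by rewrite !sumr_const !card_ord -mulrnA mulr_natl mulnC.
Qed.

Lemma mx_l1D m p (M N : 'M[C]_(m, p)) : mx_l1 (M + N) <= mx_l1 M + mx_l1 N.
Proof.
rewrite /mx_l1 -big_split /=; apply: ler_sum => i _; rewrite -big_split /=.
by apply: ler_sum => j _; rewrite mxE ler_normD.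
Qed.

Lemma mx_l1M m p q (M : 'M[C]_(m, p)) (N : 'M[C]_(p, q)) :
  mx_l1 (M *m N) <= mx_l1 M * mx_l1 N.
Proof.
rewrite /mx_l1 mulr_suml; apply: ler_sum => i _.
apply: le_trans (_ : \sum_k \sum_l `|M i l| * `|N l k| <= _).
  apply: ler_sum => k _; rewrite mxE; apply: le_trans (ler_norm_sum _ _ _) _.
  by apply: ler_sum => l _; rewrite normrM.
rewrite exchange_big /= mulr_suml; apply: ler_sum => l _; rewrite -mulr_sumr.
rewrite ler_wpM2l // (bigD1 l) //= lerDl.
by apply: sumr_ge0 => *; apply: sumr_ge0.
Qed.

Lemma row_free_1D r (E : 'M[C]_r) : mx_l1 E < 1 -> row_free (1%:M + E).
Proof.
move=> E_lt1; apply: inj_row_free => v; rewrite mulmxDr mulmx1 => /(canRL (addKr _)).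
rewrite addr0 => vE; apply: contraTeq E_lt1 => /mx_l1_gt0 v_gt0.
rewrite le_gtF // -(ler_pM2l v_gt0) mulr1.
have {1}-> : mx_l1 v = mx_l1 (v *m E).
  by apply: eq_bigr => i _; apply: eq_bigr => j _; rewrite vE mxE normrN.
exact: mx_l1M.
Qed.

Lemma mxrank_lsc m p (M : 'M[C]_(m, p)) :
  exists2 d, 0 < d & forall M', mx_l1 (M' - M) < d -> (\rank M <= \rank M')%N.
Proof.
(* X M Y = 1 for one-sided inverses X, Y of the rank factorization of M, and
   X M' Y stays invertible for M' close to M. *)
have [X XM1] := row_fullP (col_base_full M).
have [Y MY1] := row_freeP (row_base_free M).
have XMY1 : X *m M *m Y = 1%:M.
  have -> : X *m M *m Y = X *m (col_base M *m row_base M) *m Y by rewrite mulmx_base.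
  by rewrite mulmxA XM1 mul1mx MY1.
pose c := mx_l1 X * mx_l1 Y + 1.
have c_gt0 : 0 < c by rewrite ltr_wpDl ?mulr_ge0 ?mx_l1_ge0.
exists c^-1; first by rewrite invr_gt0.
move=> M' M'M; set E := X *m (M' - M) *m Y.
have E_lt1 : mx_l1 E < 1.
  have E_le : mx_l1 E <= mx_l1 X * mx_l1 Y * mx_l1 (M' - M).
    apply: le_trans (mx_l1M _ _) _; rewrite mulrAC.
    by rewrite ler_wpM2r ?mx_l1_ge0 ?mx_l1M.
  apply: le_lt_trans E_le _.
  apply: le_lt_trans (ler_wpM2l _ (ltW M'M)) _; first by rewrite mulr_ge0 ?mx_l1_ge0.
  by rewrite ltr_pdivrMr // mul1r ltrDl.
have XM'Y : X *m M' *m Y = 1%:M + E by rewrite /E mulmxBr mulmxBl XMY1 addrC subrK.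
have /eqP rk := row_free_1D E_lt1; rewrite -XM'Y in rk.
apply: leq_trans (eq_leq (esym rk)) _.
exact: leq_trans (mxrankM_maxl _ _) (mxrankM_maxr _ _).
Qed.

End EntrywiseNorm.

Section Krylov.
Local Open Scope ring_scope.
Variables (F : fieldType) (j : nat).

Definition krylov_mx m N (B : 'M[F]_m) (V : 'M[F]_(j, m)) : 'M_(\sum_(k < N) j, m) :=
  \mxcol_(k < N) (V *m B ^+ k).

Lemma krylov_mxE m N (B : 'M[F]_m) V :
  (krylov_mx N B V :=: \sum_(k < N) <<V *m B ^+ k>>)%MS.
Proof. exact: eqmx_col. Qed.

Variable n' : nat.
Local Notation n := n'.+1.

Lemma horner_mx_coefE (B : 'M[F]_n) (r : {poly F}) :
  horner_mx B r = \sum_(i < size r) r`_i *: B ^+ i.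
Proof.
rewrite -{1}(coefK r) poly_def linear_sum /=; apply: eq_bigr => i _.
by rewrite linearZ /= rmorphXn /= horner_mx_X.
Qed.

Lemma horner_mx_sub_krylov N (B : 'M[F]_n) V (r : {poly F}) : (size r <= N)%N ->
  (V *m horner_mx B r <= krylov_mx N B V)%MS.
Proof.
move=> le_rN; rewrite krylov_mxE horner_mx_coefE mulmx_sumr; apply/summx_sub => i _.
rewrite -scalemxAr scalemx_sub // (sumsmx_sup (widen_ord le_rN i)) ?genmxE //.
Qed.

Lemma horner_mx_sub_krylov_full (B : 'M[F]_n) V (r : {poly F}) :
  (V *m horner_mx B r <= krylov_mx n B V)%MS.
Proof.
have -> : horner_mx B r = horner_mx B (r %% char_poly B).
  by rewrite {1}(divp_eq r (char_poly B)) rmorphD rmorphM /= Cayley_Hamilton mulr0 add0r.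
apply: horner_mx_sub_krylov; rewrite -ltnS -(size_char_poly B) ltn_modp.
by rewrite monic_neq0 ?char_poly_monic.
Qed.

Lemma mxrank_krylov_le N (B : 'M[F]_n) V (f : {poly F}) : f \is monic ->
  (\rank (krylov_mx N B V) <= \rank (horner_mx B f) + j * (size f).-1)%N.
Proof.
move=> f_monic; have f_gt0 : (0 < size f)%N by rewrite size_poly_gt0 monic_neq0.
have sub : (krylov_mx N B V <= horner_mx B f + krylov_mx (size f).-1 B V)%MS.
  rewrite krylov_mxE; apply/sumsmx_subP => k _; rewrite genmxE.
  have -> : B ^+ k = horner_mx B 'X^k by rewrite rmorphXn /= horner_mx_X.
  rewrite (divp_eq 'X^k f) rmorphD rmorphM /= -mulmxE mulmxDr mulmxA.
  apply: addmx_sub_adds; first exact: submxMl.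
  by apply: horner_mx_sub_krylov; rewrite -ltnS prednK // ltn_modpN0 // monic_neq0.
apply: leq_trans (mxrankS sub) _; apply: leq_trans (mxrank_adds_leqif _ _).1 _.
rewrite leq_add2l; apply: leq_trans (rank_leq_row _) _.
by rewrite sum_nat_const card_ord mulnC.
Qed.

End Krylov.

Section Continuity.
Local Open Scope ring_scope.
Variable C : numFieldType.

Lemma mx_l1_exprB n (A : 'M[C]_n) k : exists2 K, 0 <= K &
  forall B, mx_l1 (B - A) <= 1 -> mx_l1 (B ^+ k - A ^+ k) <= K * mx_l1 (B - A).
Proof.
elim: k => [|k [K K_ge0 IH]].
  exists 0 => // B _; rewrite subrr mul0r.
  by rewrite /mx_l1 big1 // => i _; rewrite big1 // => l _; rewrite mxE normr0.
exists (K * (mx_l1 A + 1) + mx_l1 (A ^+ k)).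
  by rewrite addr_ge0 ?mulr_ge0 ?addr_ge0 ?mx_l1_ge0.
move=> B BA_le1; set w := mx_l1 (B - A).
have -> : B ^+ k.+1 - A ^+ k.+1 = (B ^+ k - A ^+ k) *m B + A ^+ k *m (B - A).
  by rewrite !exprSr -!mulmxE mulmxBl mulmxBr addrA subrK.
have B_le : mx_l1 B <= mx_l1 A + 1.
  by apply: le_trans (lerD (lexx _) BA_le1); rewrite -{1}(subrK A B) addrC mx_l1D.
rewrite mulrDl; apply: le_trans (mx_l1D _ _) (lerD _ (mx_l1M _ _)).
apply: le_trans (mx_l1M _ _) _; rewrite mulrAC.
by apply: ler_pM; rewrite ?mx_l1_ge0 ?IH.
Qed.


Lemma krylov_mx_lipschitz j m N (A : 'M[C]_m) (V : 'M[C]_(j, m)) : exists2 K, 0 <= K &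
  forall B, mx_l1 (B - A) <= 1 ->
    mx_l1 (krylov_mx N B V - krylov_mx N A V) <= K * mx_l1 (B - A).
Proof.
have [Kp Kp_ge0 Kp_lip] := fin_all_exists2 (fun k : 'I_N => mx_l1_exprB A k).
set S := \sum_k Kp k; have S_ge0 : 0 <= S by apply: sumr_ge0.
exists (((\sum_(k < N) j) * m)%:R * (mx_l1 V * S)).
  by rewrite !mulr_ge0 ?mx_l1_ge0.
move=> B BA_le1; rewrite -mulrA; apply: mx_l1_le_entries => r c.
have -> : (krylov_mx N B V - krylov_mx N A V) r c =
    (V *m (B ^+ tagnat.sig1 r - A ^+ tagnat.sig1 r)) (tagnat.sig2 r) c.
  by rewrite mulmxBr !mxE.
apply: le_trans (ler_mx_l1 _ _ _) _; apply: le_trans (mx_l1M _ _) _.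
rewrite -mulrA; apply: ler_wpM2l; first exact: mx_l1_ge0.
apply: le_trans (Kp_lip _ _ BA_le1) _; apply: ler_wpM2r; first exact: mx_l1_ge0.
by rewrite /S (bigD1 (tagnat.sig1 r)) //= lerDl sumr_ge0.
Qed.

Lemma lipschitz_mxrank_lsc n' p q (f : 'M[C]_n'.+1 -> 'M[C]_(p, q)) A K : 0 <= K ->
  (forall B, mx_l1 (B - A) <= 1 -> mx_l1 (f B - f A) <= K * mx_l1 (B - A)) ->
  exists2 e, 0 < e &
    forall B : 'M_n'.+1, (forall i k, `|A i k - B i k| < e) -> (\rank (f A) <= \rank (f B))%N.
Proof.
move=> K_ge0 f_lip; have [d d_gt0 lsc] := mxrank_lsc (f A).
set c := K + d + 1; have c_gt0 : 0 < c by rewrite ltr_wpDl // addr_ge0 // ltW.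
have nn_gt0 : 0 < (n'.+1 * n'.+1)%:R :> C by rewrite ltr0n.
exists (d / c / (n'.+1 * n'.+1)%:R); first by rewrite !divr_gt0.
move=> B AB_lt; set w := mx_l1 (B - A).
have w_le : w <= d / c.
  apply: le_trans (_ : w <= (n'.+1 * n'.+1)%:R * (d / c / (n'.+1 * n'.+1)%:R)) _.
    by apply: mx_l1_le_entries => i k; rewrite !mxE distrC ltW.
  by rewrite mulrC divfK // lt0r_neq0.
apply: lsc; apply: le_lt_trans (f_lip B _) _.
  by apply: le_trans w_le _; rewrite ler_pdivrMr // mul1r /c addrAC lerDr addr_ge0.
apply: le_lt_trans (ler_wpM2l K_ge0 w_le) _.
by rewrite mulrA ltr_pdivrMr // mulrC ltr_pM2l // /c -addrA ltrDl addr_gt0.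
Qed.

Lemma mxrank_krylov_lsc j n' N (A : 'M[C]_n'.+1) (V : 'M[C]_(j, n'.+1)) :
  exists2 e, 0 < e & forall B : 'M_n'.+1, (forall i k, `|A i k - B i k| < e) ->
    (\rank (krylov_mx N A V) <= \rank (krylov_mx N B V))%N.
Proof.
have [K K_ge0 K_lip] := krylov_mx_lipschitz N A V.
exact: lipschitz_mxrank_lsc K_ge0 K_lip.
Qed.

End Continuity.

Definition delta_row (F : nzRingType) n (p : nat) : 'rV[F]_n :=
  (\row_q ((q : nat) == p)%:R)%R.
Arguments delta_row {F n}.

Section DeltaRows.
Local Open Scope ring_scope.
Variables (F : fieldType) (n : nat).

Lemma delta_row_mul m p (M : 'M[F]_(n, m)) (lt_pn : (p < n)%N) :
  delta_row p *m M = row (Ordinal lt_pn) M.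
Proof.
apply/rowP => q; rewrite !mxE (bigD1 (Ordinal lt_pn)) //= big1 ?mxE ?eqxx ?mul1r ?addr0 //.
by move=> i; rewrite -val_eqE mxE => /negbTE /= ->; rewrite mul0r.
Qed.

Definition delta_rows (Z : {set 'I_n}) : 'M[F]_(#|Z|, n) :=
  \matrix_(z < #|Z|) delta_row (enum_val z).

Lemma row_free_delta_rows Z : row_free (delta_rows Z).
Proof.
apply/row_freeP; exists (delta_rows Z)^T; apply/matrixP => z z'.
rewrite /delta_rows /delta_row !mxE (bigD1 (enum_val z)) //= big1 => [|q ne_qz]; last first.
  by move: ne_qz; rewrite !mxE -val_eqE => /negbTE ->; rewrite mul0r.
by rewrite !mxE eqxx mul1r addr0 (inj_eq val_inj) (inj_eq enum_val_inj) eq_sym.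
Qed.

Lemma card_delta_rows_ker (Z : {set 'I_n}) (M : 'M[F]_n) :
  (forall p : 'I_n, p \in Z -> delta_row p *m M = 0) -> (#|Z| + \rank M <= n)%N.
Proof.
move=> ZM0; have /mxrankS : (delta_rows Z <= kermx M)%MS.
  by apply/row_subP => z; rewrite rowK; apply/sub_kermxP/ZM0/enum_valP.
by rewrite mxrank_ker (eqP (row_free_delta_rows Z)) leq_subRL ?rank_leq_col // addnC.
Qed.

End DeltaRows.

Section BlockLabels.
Variables (K : eqType) (k0 : K).

(* Position p of the Jordan matrix with blocks kb, each given as (key, size),
   is labelled (key, offset of p in its block, size). *)
Definition block_labels (kb : seq (K * nat)) : seq (K * nat * nat) :=
  flatten [seq [seq (b.1, t, b.2) | t <- iota 0 b.2] | b <- kb].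

Local Notation label kb p := (nth (k0, 0, 0) (block_labels kb) p).

Lemma block_labels_cons b kb :
  block_labels (b :: kb) = [seq (b.1, t, b.2) | t <- iota 0 b.2] ++ block_labels kb.
Proof. by []. Qed.

Lemma size_block_labels kb : size (block_labels kb) = sumn (map snd kb).
Proof.
by elim: kb => //= b kb IH; rewrite block_labels_cons size_cat size_map size_iota IH.
Qed.

Lemma nth_block_labels_cons b kb p :
  label (b :: kb) p = if p < b.2 then (b.1, p, b.2) else label kb (p - b.2).
Proof.
rewrite block_labels_cons nth_cat size_map size_iota.
by case: ltnP => // lt_p; rewrite (nth_map 0) ?size_iota // nth_iota.
Qed.

Lemma block_labels_next kb p k t m :
  p < size (block_labels kb) -> label kb p = (k, t, m) -> t.+1 < m ->
  p.+1 < size (block_labels kb) /\ label kb p.+1 = (k, t.+1, m).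
Proof.
elim: kb p => //= b kb IH p; rewrite !nth_block_labels_cons block_labels_cons size_cat.
rewrite size_map size_iota; case: (ltnP p b.2) => lt_p.
  by move=> _ [<- <- <-] lt_tm; rewrite lt_tm; split=> //; lia.
move=> lt_pn lab_p lt_tm; have lt_p' : p - b.2 < size (block_labels kb) by lia.
have [lt_p1 lab_p1] := IH _ lt_p' lab_p lt_tm.
have -> : (p.+1 < b.2) = false by lia.
by rewrite subSn //; split=> //; lia.
Qed.

Lemma block_labels_start kb p k t m :
  p < size (block_labels kb) -> label kb p = (k, t, m) ->
  t <= p /\ label kb (p - t) = (k, 0, m).
Proof.
elim: kb p => //= b kb IH p; rewrite !nth_block_labels_cons block_labels_cons size_cat.
rewrite size_map size_iota; case: (ltnP p b.2) => lt_p.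
  by move=> _ [<- <- <-]; rewrite subnn; split; last by rewrite (leq_ltn_trans _ lt_p).
move=> lt_pn lab_p; have lt_p' : p - b.2 < size (block_labels kb) by lia.
have [le_tp lab_s] := IH _ lt_p' lab_p; split; first by lia.
have -> : (p - t < b.2) = false by lia.
by have -> : p - t - b.2 = p - b.2 - t by lia.
Qed.

Lemma mem_block_labels kb l : l \in block_labels kb ->
  exists2 b, b \in kb & [/\ l.1.1 = b.1, l.2 = b.2 & l.1.2 < b.2].
Proof.
move=> /flattenP [s /mapP [b kb_b ->] /mapP [t]]; rewrite mem_iota => /andP [_ lt_t] ->.
by exists b.
Qed.

Lemma uniq_block_labels kb : uniq (map fst kb) -> uniq (block_labels kb).
Proof.
elim: kb => //= b kb IH /andP [b_notin uniq_kb]; rewrite block_labels_cons cat_uniq IH //.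
rewrite andbT map_inj_uniq ?iota_uniq; last by move=> x y [].
apply/hasPn => l /mem_block_labels [b' kb_b' [l_b' _ _]]; apply/mapP => [[t _ l_b]].
by move: b_notin; rewrite l_b /= in l_b'; rewrite l_b' map_f.
Qed.

Lemma count_block_labels (P : pred (K * nat * nat)) kb :
  count P (block_labels kb) = \sum_(b <- kb) count P [seq (b.1, t, b.2) | t <- iota 0 b.2].
Proof.
by elim: kb => [|b kb IH]; rewrite ?big_nil ?big_cons // block_labels_cons count_cat IH.
Qed.

Lemma block_label_size_le kb l : l \in block_labels kb -> l.2 <= size (block_labels kb).
Proof.
move=> /mem_block_labels [b kb_b [_ -> _]].
by rewrite size_block_labels sumnE big_map (big_rem b) //= leq_addr.
Qed.

End BlockLabels.

Section JordanMatrix.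
Local Open Scope ring_scope.
Variables (F : fieldType) (K : eqType) (k0 : K) (phi : K -> F) (kb : seq (K * nat)).
Variable n' : nat.
Local Notation n := n'.+1.
Hypothesis size_kb : size (block_labels kb) = n.

Lemma horner_mx_XsubC (A : 'M[F]_n) c :
  horner_mx A ('X - c%:P) = A - c%:M.
Proof. by rewrite rmorphB /= horner_mx_X horner_mx_C. Qed.

Definition jordan_blocks : seq (F * nat) := [seq (phi b.1, b.2) | b <- kb].

Local Notation J := (jordan_mx n jordan_blocks).
Local Notation label p := (nth (k0, 0%N, 0%N) (block_labels kb) p).

Lemma jordan_data_blocks :
  jordan_data jordan_blocks = [seq (phi l.1.1, (l.1.2.+1 < l.2)%N) | l <- block_labels kb].
Proof.
rewrite /jordan_data /block_labels map_flatten -!map_comp; congr flatten.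
by apply: eq_map => b /=; rewrite -map_comp.
Qed.

Lemma delta_row_jordan p k t m c : (p < n)%N -> label p = (k, t, m) ->
  delta_row p *m (J - c%:M) =
    (phi k - c) *: delta_row p + (if (t.+1 < m)%N then delta_row p.+1 else 0).
Proof.
move=> lt_pn lab_p; rewrite delta_row_mul; apply/rowP => q; rewrite !mxE.
rewrite jordan_data_blocks (nth_map (k0, 0%N, 0%N)) ?size_kb // lab_p /=.
case: (t.+1 < m)%N; have [->|nqp] := eqVneq q (Ordinal lt_pn); rewrite ?mxE /= ?eqxx;
  try rewrite -val_eqE /= in nqp.
- by rewrite (ltn_eqF (ltnSn p)) mulr1 addr0.
- by rewrite (negbTE nqp) andbT mulr0 add0r subr0; case: eqP.
- by rewrite mulr1 addr0.
- by rewrite (negbTE nqp) andbF mulr0 addr0 subr0.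
Qed.

Lemma block_labels_shift p k t m r : (p < n)%N -> label p = (k, t, m) -> (t + r < m)%N ->
  (p + r < n)%N /\ label (p + r)%N = (k, (t + r)%N, m).
Proof.
elim: r => [|r IH] lt_pn lab_p lt_trm; first by rewrite !addn0.
have [|lt_prn lab_pr] := IH lt_pn lab_p; first by lia.
have := block_labels_next _ lab_pr; rewrite size_kb !addnS.
by apply=> //; rewrite -addnS.
Qed.

Lemma delta_row_jordan_chain p k t m r : (p < n)%N -> label p = (k, t, m) ->
  (t + r < m)%N -> delta_row p *m (J - (phi k)%:M) ^+ r = delta_row (p + r)%N.
Proof.
move=> lt_pn lab_p; elim: r => [|r IH] lt_trm; first by rewrite expr0 mulmx1 addn0.
have [|lt_prn lab_pr] := block_labels_shift lt_pn lab_p (r := r).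
  by lia.
rewrite exprSr -mulmxE mulmxA IH; last by lia.
rewrite (delta_row_jordan _ lt_prn lab_pr) subrr scale0r add0r addnS.
by rewrite ifT //; lia.
Qed.

Lemma block_label_offset_lt p k t m : (p < n)%N -> label p = (k, t, m) -> (t < m)%N.
Proof.
rewrite -size_kb => lt_pn lab_p; have := mem_nth (k0, 0%N, 0%N) lt_pn.
by rewrite lab_p => /mem_block_labels [b _ [_ /= -> ->]].
Qed.

Lemma delta_row_jordan_nilp p k t m : (p < n)%N -> label p = (k, t, m) ->
  delta_row p *m (J - (phi k)%:M) ^+ (m - t) = 0.
Proof.
move=> lt_pn lab_p; have lt_tm := block_label_offset_lt lt_pn lab_p.
have [|lt_prn lab_pr] := block_labels_shift lt_pn lab_p (r := (m - t).-1); first by lia.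
have -> : (m - t = (m - t).-1.+1)%N by lia.
rewrite exprSr -mulmxE mulmxA (delta_row_jordan_chain lt_pn lab_p); last by lia.
by rewrite (delta_row_jordan _ lt_prn lab_pr) subrr scale0r add0r ifN //; lia.
Qed.

Lemma delta_row_horner_dvd p k t m (g : {poly F}) : (p < n)%N -> label p = (k, t, m) ->
  ('X - (phi k)%:P) ^+ (m - t) %| g -> delta_row p *m horner_mx J g = 0.
Proof.
move=> lt_pn lab_p /divpK <-; rewrite mulrC rmorphM rmorphXn /= horner_mx_XsubC -mulmxE mulmxA.
by rewrite (delta_row_jordan_nilp lt_pn lab_p) mul0mx.
Qed.

Lemma delta_row_start_horner s k m t (e : {poly F}) : (s < n)%N -> label s = (k, 0%N, m) ->
  (t < m)%N -> ('X - (phi k)%:P) ^+ m %| e - 1 ->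
  delta_row s *m horner_mx J (('X - (phi k)%:P) ^+ t * e) = delta_row (s + t)%N.
Proof.
move=> lt_sn lab_s lt_tm dvd_e1; rewrite -[e](subrK 1) mulrDr mulr1 rmorphD mulmxDr.
rewrite (delta_row_horner_dvd lt_sn lab_s) ?subn0 ?dvdp_mull // add0r.
by rewrite rmorphXn /= horner_mx_XsubC (delta_row_jordan_chain lt_sn lab_s).
Qed.

End JordanMatrix.

Lemma bundle_data0 ps : bundle_data 0 ps -> ps = [::].
Proof.
case: ps => // p ps /andP [/= /andP [/and3P [_ pos_p nil_p] _]].
by case: p pos_p nil_p => //= a p /andP [a_gt0 _] _; rewrite -!addnA addn_eq0 eqn0Ngt a_gt0.
Qed.

Lemma count_const (T : Type) (b : bool) (s : seq T) :
  count (fun=> b) s = if b then size s else 0.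
Proof. by case: b; [exact: count_predT | exact: count_pred0]. Qed.

Lemma card_set_nth (T : Type) (x0 : T) (s : seq T) n (P : pred T) : size s = n ->
  #|[set p : 'I_n | P (nth x0 s p)]| = count P s.
Proof.
move=> <-; rewrite cardsE cardE /enum_mem size_filter -enumT.
rewrite (@eq_count _ _ (preim val (fun i => P (nth x0 s i)))) // -count_map val_enum_ord.
by rewrite -count_map -/(mkseq _ _) mkseq_nth.
Qed.

Lemma count_iota_geq a b m : count (leq a) (iota b m) = m - (a - b).
Proof. by elim: m b => //= m IH b; rewrite IH; case: leqP; lia. Qed.

Lemma count_iota_minn m e : count (fun t => m <= t + e) (iota 0 m) = minn m e.
Proof.
have -> : minn m e = m - (m - e - 0) by lia.
by rewrite -count_iota_geq; apply: eq_count => t /=; lia.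
Qed.

Lemma sum_iota_nth (p : seq nat) : \sum_(i <- iota 0 (size p)) nth 0 p i = sumn p.
Proof. by rewrite sumnE [RHS](big_nth 0) /index_iota subn0. Qed.

Lemma sum_iota_nth_lt (p : seq nat) j :
  \sum_(i <- iota 0 (size p)) (if i < j then nth 0 p i else 0) = \sum_(i < j) nth 0 p i.
Proof.
elim: p j => [|a p IH] [|j] /=; rewrite ?big_nil ?big_ord0 //.
- by rewrite big1 // => i _; rewrite nth_nil.
- by rewrite big_cons -add1n iotaDl big_map big1.
by rewrite big_cons big_ord_recl -add1n iotaDl big_map -IH.
Qed.

Lemma sum_minn_nth_sorted (p : seq nat) j : sorted geq p ->
  \sum_(m <- p) minn m (nth 0 p j) + \sum_(i < j) nth 0 p i = j * nth 0 p j + sumn p.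
Proof.
elim: p j => [|a p IH] j /=.
  by rewrite big_nil big1 ?nth_nil ?muln0 // => i _; rewrite nth_nil.
move=> sorted_ap; have p_le_a : {in p, forall m, m <= a}.
  by apply/allP; apply: order_path_min sorted_ap => x y z /=; lia.
have sorted_p : sorted geq p := path_sorted sorted_ap.
case: j => [|j].
  rewrite big_ord0 addn0 big_cons minnn sumnE big_seq [in RHS]big_seq; congr (_ + _).
  by apply: eq_bigr => m /p_le_a /minn_idPl.
rewrite big_ord_recl /= big_cons.
have pj_le_a : nth 0 p j <= a.
  by case: (ltnP j (size p)) => [/(mem_nth 0)/p_le_a|/(nth_default 0) ->].
have := IH j sorted_p; rewrite (minn_idPr pj_le_a).
under [\sum_(i < j) nth 0 p (0 + i)]eq_bigr do rewrite add0n.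
lia.
Qed.

Lemma uniq_map_eq (S T : eqType) (f : S -> T) s x y :
  uniq (map f s) -> x \in s -> y \in s -> f x = f y -> x = y.
Proof.
elim: s => //= a s IH /andP [fa_notin uniq_fs]; rewrite !inE.
case/orP=> [/eqP -> | x_in] /orP [/eqP -> | y_in] // => [|fxa|]; last exact: IH.
- by move=> fay; move: fa_notin; rewrite fay map_f.
- by move: fa_notin; rewrite -fxa map_f.
Qed.

Section BundleKeys.
Variables (T : eqType) (lam : seq T) (ps : seq (seq nat)).
Hypothesis size_lam : size lam = size ps.

(* The i-th Jordan block of the eigenvalue x.1 with Segre characteristic x.2
   is keyed (x, i). *)
Definition bundle_keys : seq (T * seq nat * nat * nat) :=
  flatten [seq [seq ((x, i), nth 0 x.2 i) | i <- iota 0 (size x.2)] | x <- zip lam ps].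

Lemma mem_bundle_keys b : b \in bundle_keys ->
  [/\ b.1.1 \in zip lam ps, b.2 = nth 0 b.1.1.2 b.1.2 & b.1.2 < size b.1.1.2].
Proof.
by move/flattenP => [s /mapP [x x_in ->] /mapP [k]]; rewrite mem_iota => /andP [_ ?] ->.
Qed.

Lemma uniq_bundle_keys : uniq lam -> uniq (map fst bundle_keys).
Proof.
move=> /(zip_uniql ps); rewrite /bundle_keys.
elim: (zip lam ps) => //= x s IH /andP [x_notin uniq_s].
rewrite map_cat cat_uniq IH // andbT -map_comp map_inj_uniq ?iota_uniq /=; last by move=> ? ? [].
apply/hasPn => k /mapP [b /flattenP [s' /mapP [y y_in ->] /mapP [i _ ->]] ->] /=.
by apply/mapP => [[i' _ [xy _]]]; move: x_notin; rewrite -xy y_in.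
Qed.

Lemma sum_bundle_keys (G : seq nat -> nat -> nat -> nat) :
  \sum_(b <- bundle_keys) G b.1.1.2 b.1.2 b.2 =
    \sum_(p <- ps) \sum_(i <- iota 0 (size p)) G p i (nth 0 p i).
Proof.
rewrite /bundle_keys big_flatten big_map /=.
elim: ps lam size_lam => [|p ps' IH] [|c lam'] //= => [_|[size_lam']].
  by rewrite !big_nil.
by rewrite !big_cons IH // big_map.
Qed.

Lemma mem_bundle_labels l : l \in block_labels bundle_keys ->
  [/\ l.1.1.1 \in zip lam ps, l.2 = nth 0 l.1.1.1.2 l.1.1.2 & l.1.2 < l.2].
Proof.
by case/mem_block_labels=> b /mem_bundle_keys [? ? ?] [-> -> ->].
Qed.

Lemma bundle_label_eq l l' : uniq lam ->
  l \in block_labels bundle_keys -> l' \in block_labels bundle_keys ->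
  l.1.1.1.1 = l'.1.1.1.1 -> l.1.1.2 = l'.1.1.2 -> l.1.2 = l'.1.2 -> l = l'.
Proof.
move=> uniq_lam /mem_bundle_labels [zip_l size_l _] /mem_bundle_labels [zip_l' size_l' _].
have uniq_fst : uniq (map fst (zip lam ps)) by rewrite -/(unzip1 _) unzip1_zip ?size_lam.
move=> /(uniq_map_eq uniq_fst zip_l zip_l'); move: size_l size_l'; clear zip_l zip_l'.
by case: l l' => [[[? ?] ?] ?] [[[? ?] ?] ?] /= -> -> -> -> ->.
Qed.

Lemma size_bundle_labels n : bundle_data n ps -> size (block_labels bundle_keys) = n.
Proof.
case/andP=> _ /eqP <-; rewrite size_block_labels !sumnE !big_map.
rewrite (sum_bundle_keys (fun _ _ m => m)).
by apply: eq_bigr => p _; rewrite sum_iota_nth.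
Qed.

Lemma count_bundle_labels_lt j :
  count (fun l => l.1.1.2 < j) (block_labels bundle_keys) = \sum_(i < j) deg_seq ps i.
Proof.
rewrite count_block_labels.
under eq_bigr => b _ do
  rewrite count_map (@eq_count _ _ (fun=> b.1.2 < j)) // count_const size_iota.
rewrite (sum_bundle_keys (fun _ i m => if i < j then m else 0)) /deg_seq exchange_big /=.
by apply: eq_bigr => p _; rewrite sum_iota_nth_lt.
Qed.

End BundleKeys.

Lemma jordan_blocks_bundle_keys (F : fieldType) (lam : seq F) ps :
  jordan_blocks (fun k => k.1.1) (bundle_keys lam ps) =
    flatten [seq [seq (x.1, m) | m <- x.2] | x <- zip lam ps].
Proof.
rewrite /jordan_blocks /bundle_keys map_flatten -map_comp; congr flatten.
apply: eq_map => x /=; rewrite -map_comp.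
by rewrite -{3}(mkseq_nth 0 x.2) /mkseq -map_comp.
Qed.

Lemma sum_minn_deg_seq n ps j : bundle_data n ps ->
  \sum_(p <- ps) \sum_(m <- p) minn m (nth 0 p j) + \sum_(i < j) deg_seq ps i =
    j * deg_seq ps j + n.
Proof.
case/andP=> /allP segre_ps /eqP <-; rewrite /deg_seq exchange_big /= -big_split /=.
rewrite big_distrr sumnE big_map -big_split /=; apply: eq_big_seq => p /segre_ps.
by case/and3P=> sorted_p _ _; rewrite sum_minn_nth_sorted.
Qed.

Section SpectralPoly.
Local Open Scope ring_scope.
Variable F : fieldType.

Lemma spectral_poly (c : F) (q : {poly F}) m :
  coprimep ('X - c%:P) q -> exists e, q %| e /\ ('X - c%:P) ^+ m %| e - 1.
Proof.
move=> /(coprimep_expl m) /Bezout_eq1_coprimepP [[u v] /= uv1].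
exists (v * q); split; first exact: dvdp_mull.
by rewrite -uv1 opprD addrCA subrr addr0 dvdpNr dvdp_mull.
Qed.

End SpectralPoly.

Section InvariantFactor.
Local Open Scope ring_scope.
Variables (F : fieldType) (lam : seq F) (ps : seq (seq nat)) (j : nat).
Hypothesis size_lam : size lam = size ps.

(* The paper's p_(j+1): [nth] and [deg_seq] count from 0. *)
Definition invariant_factor : {poly F} :=
  \prod_(x <- zip lam ps) ('X - x.1%:P) ^+ nth 0%N x.2 j.

Lemma invariant_factor_monic : invariant_factor \is monic.
Proof. by apply: monic_prod => x _; rewrite monic_exp // monicXsubC. Qed.

Lemma size_invariant_factor : size invariant_factor = (deg_seq ps j).+1.
Proof.
rewrite /invariant_factor /deg_seq; elim: ps lam size_lam => [|p ps' IH] [|c lam'] //=.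
  by rewrite !big_nil size_poly1.
move=> [/IH {}IH]; rewrite !big_cons size_Mmonic ?size_exp_XsubC ?IH ?addnS //.
  by rewrite expf_neq0 // polyXsubC_eq0.
by apply: monic_prod => *; rewrite monic_exp // monicXsubC.
Qed.

End InvariantFactor.

Section UpperBound.
Local Open Scope ring_scope.
Variables (F : fieldType) (n' : nat) (lam : seq F) (pt : seq (seq nat)) (j : nat).
Local Notation n := n'.+1.
Hypotheses (bd_pt : bundle_data n pt) (size_lam : size lam = size pt).

Local Notation kb := (bundle_keys lam pt).
Local Notation J := (jordan_mx n (jordan_blocks (fun k => k.1.1) kb)).
Local Notation f := (invariant_factor lam pt j).
Local Notation label p := (nth (0, [::], 0%N, 0%N, 0%N) (block_labels kb) p).

Lemma mxrank_invariant_factor_jordan :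
  (\rank (horner_mx J f) + \sum_(p <- pt) \sum_(m <- p) minn m (nth 0 p j) <= n)%N.
Proof.
have size_kb := size_bundle_labels size_lam bd_pt.
pose killed (l : F * seq nat * nat * nat * nat) := (l.2 <= l.1.2 + nth 0 l.1.1.1.2 j)%N.
set Z := [set p : 'I_n | killed (label p)].
have card_Z : #|Z| = (\sum_(p <- pt) \sum_(m <- p) minn m (nth 0 p j))%N.
  rewrite card_set_nth // count_block_labels.
  under eq_bigr => b _ do
    rewrite count_map (@eq_count _ _ (fun t => b.2 <= t + nth 0 b.1.1.2 j)%N) // count_iota_minn.
  rewrite (sum_bundle_keys size_lam (fun p _ m => minn m (nth 0 p j))).
  by apply: eq_bigr => p _; rewrite [RHS](big_nth 0) /index_iota subn0.
have Z_kill p : p \in Z -> delta_row p *m horner_mx J f = 0.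
  rewrite inE /killed; case lab_p : (label p) => [[k t] m] /= killed_p.
  apply: (delta_row_horner_dvd size_kb (ltn_ord p) lab_p).
  apply: dvdp_trans (dvdp_exp2l _ (_ : m - t <= nth 0 k.1.2 j)%N) _; first by rewrite leq_subLR.
  have /mem_bundle_labels [/= zip_k _ _] : (k, t, m) \in block_labels kb.
    by rewrite -lab_p mem_nth // size_kb.
  by rewrite /invariant_factor (big_rem _ zip_k) dvdp_mulIl.
by rewrite -card_Z addnC card_delta_rows_ker.
Qed.

Lemma mxrank_krylov_bundle_le N (V : 'M[F]_(j, n)) (P : 'M[F]_n) : P \in unitmx ->
  (\rank (krylov_mx N (invmx P *m J *m P) V) <= \sum_(i < j) deg_seq pt i)%N.
Proof.
move=> P_unit; apply: leq_trans (mxrank_krylov_le N _ V (invariant_factor_monic lam pt j)) _.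
rewrite size_invariant_factor //= horner_mx_uconjC //.
rewrite -(leq_add2l (\sum_(p <- pt) \sum_(m <- p) minn m (nth 0 p j))) addnA.
rewrite (sum_minn_deg_seq j bd_pt) [(_ + n)%N]addnC leq_add2r addnC.
apply: leq_trans mxrank_invariant_factor_jordan; rewrite leq_add2r.
exact: leq_trans (mxrankM_maxl _ P) (mxrankM_maxr (invmx P) (horner_mx J f)).
Qed.

End UpperBound.

Section LowerBound.
Local Open Scope ring_scope.
Variables (F : fieldType) (n' : nat) (lam : seq F) (ps : seq (seq nat)) (j : nat).
Local Notation n := n'.+1.
Hypotheses (bd_ps : bundle_data n ps) (size_lam : size lam = size ps) (uniq_lam : uniq lam).

Local Notation kb := (bundle_keys lam ps).
Local Notation J := (jordan_mx n (jordan_blocks (fun k => k.1.1) kb)).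
Local Notation label p := (nth (0, [::], 0%N, 0%N, 0%N) (block_labels kb) p).

Let size_kb : size (block_labels kb) = n := size_bundle_labels size_lam bd_ps.

Let mem_label s : (s < n)%N -> label s \in block_labels kb.
Proof. by rewrite -size_kb; apply: mem_nth. Qed.

Definition block_start_rows : 'M[F]_(j, n) :=
  \matrix_(i < j) \sum_(s : 'I_n | ((label s).1.1.2 == i) && ((label s).1.2 == 0%N)) delta_row s.

Lemma block_start_inj (s s' : 'I_n) k k' m m' :
  label s = (k, 0%N, m) -> label s' = (k', 0%N, m') -> k.2 = k'.2 -> k.1.1 = k'.1.1 -> s = s'.
Proof.
move=> lab_s lab_s' eq_i eq_c; apply/ord_inj/eqP.
have uniq_labels := uniq_block_labels (uniq_bundle_keys ps uniq_lam).
rewrite -(nth_uniq (0, [::], 0%N, 0%N, 0%N) _ _ uniq_labels) ?size_kb // lab_s lab_s'.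
apply/eqP/(bundle_label_eq size_lam uniq_lam) => //=.
  by rewrite -lab_s mem_label.
by rewrite -lab_s' mem_label.
Qed.

Lemma block_start_rows_horner (i : 'I_j) (p : 'I_n) k t m :
  label p = (k, t, m) -> k.2 = i -> exists G, row i block_start_rows *m horner_mx J G = delta_row p.
Proof.
move=> lab_p k_i; have [|le_tp lab_s] := block_labels_start _ lab_p; first by rewrite size_kb.
have lt_sn : (p - t < n)%N by rewrite (leq_ltn_trans (leq_subr _ _)).
have lt_tm := block_label_offset_lt size_kb (ltn_ord p) lab_p.
set q := \prod_(x <- zip lam ps | x.1 != k.1.1) ('X - x.1%:P) ^+ n.
have cop : coprimep ('X - k.1.1%:P) q.
  apply: (big_ind (coprimep _)) => [|q1 q2|x ne_xc]; rewrite ?coprimep1 ?coprimepMr //.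
    by move=> -> ->.
  by apply/coprimep_expr/coprimep_XsubC2; rewrite subr_eq0.
(* e is 1 modulo (X - k.1.1)^m and kills the blocks of the other eigenvalues. *)
have [e [dvd_qe dvd_e1]] := spectral_poly m cop.
exists (('X - k.1.1%:P) ^+ t * e); rewrite rowK mulmx_suml (bigD1 (Ordinal lt_sn)) /=; last first.
  by rewrite lab_s k_i !eqxx.
rewrite (delta_row_start_horner size_kb lt_sn lab_s lt_tm dvd_e1) subnK // big1 ?addr0 //.
move=> s /andP [/andP [/eqP ki_s /eqP t_s] ne_s].
case lab_s' : (label s) ki_s t_s => [[k' t'] m'] /= ki_s t_s; rewrite {t'}t_s in lab_s'.
have ne_c : k'.1.1 != k.1.1.
  apply: contraNneq ne_s => eq_c; apply/eqP.
  by apply: (block_start_inj (s' := Ordinal lt_sn) lab_s' lab_s); rewrite ?ki_s ?k_i.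
apply: (delta_row_horner_dvd size_kb (ltn_ord s) lab_s').
have /mem_bundle_labels [/= zip_k' _ _] := mem_label (ltn_ord s); rewrite lab_s' in zip_k'.
have le_mn : (m' - 0 <= n)%N.
  by rewrite subn0 -size_kb -[m']/((k', 0%N, m').2) block_label_size_le // -lab_s' mem_label.
apply: dvdp_trans (dvdp_mulIr _ _); apply: dvdp_trans dvd_qe.
apply: dvdp_trans (dvdp_exp2l _ le_mn) _.
by rewrite /q (big_rem _ zip_k') /= ne_c dvdp_mulIl.
Qed.

Lemma delta_row_sub_krylov (p : 'I_n) :
  ((label p).1.1.2 < j)%N -> (delta_row p <= krylov_mx n J block_start_rows)%MS.
Proof.
case lab_p : (label p) => [[k t] m] /= lt_kj.
have [G <-] := block_start_rows_horner (i := Ordinal lt_kj) lab_p erefl.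
exact: submx_trans (submxMr _ (row_sub _ _)) (horner_mx_sub_krylov_full _ _ G).
Qed.

Lemma mxrank_krylov_jordan_ge :
  (\sum_(i < j) deg_seq ps i <= \rank (krylov_mx n J block_start_rows))%N.
Proof.
set T := [set p : 'I_n | ((label p).1.1.2 < j)%N].
have card_T : #|T| = (\sum_(i < j) deg_seq ps i)%N.
  rewrite (@card_set_nth _ _ _ _ (fun l : F * seq nat * nat * nat * nat => l.1.1.2 < j)%N).
    exact: count_bundle_labels_lt.
  exact: size_kb.
rewrite -card_T -(eqP (row_free_delta_rows F T)); apply: mxrankS; apply/row_subP => z.
by rewrite rowK; apply: delta_row_sub_krylov; have := enum_valP z; rewrite inE.
Qed.

End LowerBound.

Lemma complex_gt0_real (R : rcfType) (e : R[i]) :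
  (0 < e)%R -> exists2 r : R, (0 < r)%R & e = (r%:C)%C.
Proof. by case: e => a b; rewrite ltcE /= => /andP [/eqP -> a_gt0]; exists a. Qed.

Theorem lemma4 (R : realType) (n : nat) (ps pt : seq (seq nat)) :
  bundle_data n ps -> bundle_data n pt ->
  (forall A : 'M[R[i]]_n, in_bundle ps A -> in_closure (in_bundle pt) A) ->
  (size pt <= size ps)%N ->
  forall j : nat,
    (\sum_(i < j) deg_seq ps i <= \sum_(i < j) deg_seq pt i)%N.
Proof.
move=> + + + _ j; case: n => [|n'] bd_ps bd_pt closure.
  by rewrite (bundle_data0 bd_ps) big1 // => i _; rewrite /deg_seq big_nil.
pose lam : seq R[i] := [seq (k%:R)%R | k <- iota 0 (size ps)].
have size_lam : size lam = size ps by rewrite size_map size_iota.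
have uniq_lam : uniq lam.
  by rewrite map_inj_uniq ?iota_uniq // => a b /eqP; rewrite eqr_nat => /eqP.
set A := jordan_mx n'.+1 (jordan_blocks (fun k => k.1.1) (bundle_keys lam ps)).
set V := block_start_rows n' lam ps j.
have A_ps : in_bundle ps A.
  exists lam; split=> //; exists 1%:M%R; split; first exact: unitmx1.
  by rewrite invmx1 mul1mx mulmx1 /A jordan_blocks_bundle_keys.
have [e /complex_gt0_real [r r_gt0 ->] lsc] := mxrank_krylov_lsc n'.+1 A V.
have [B [[lamt [size_lamt _ [P [P_unit ->]]]] AB]] := closure A A_ps r r_gt0.
apply: leq_trans (mxrank_krylov_jordan_ge j bd_ps size_lam uniq_lam) (leq_trans (lsc _ AB) _).
by rewrite -jordan_blocks_bundle_keys mxrank_krylov_bundle_le.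
Qed.
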